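(* Every finite graph is isomorphic to an induced subgraph of the generating graph of some finite group.
   Context: The generating graph of a finite group $G$ has vertex set $G$, with distinct $x,y$ adjacent iff $\langle x,y\rangle=G$. *)

From mathcomp Require Import all_boot all_fingroup.
Set Implicit Arguments. Unset Strict Implicit. Unset Printing Implicit Defensive.

Local Open Scope group_scope.

Definition gen_adj (gT : finGroupType) (G : {set gT}) (x y : gT) : bool :=
  [&& x \in G, y \in G, x != y & <<[set x; y]>> == G].

Definition simple_graph (V : finType) (e : rel V) : Prop :=
  symmetric e /\ irreflexive e.

Definition induced_embedding (V : finType) (e : rel V)
    (gT : finGroupType) (G : {set gT}) (f : V -> gT) : Prop :=
  injective f /\ (forall v, f v \in G) /\
  (forall x y, e x y = gen_adj G (f x) (f y)).

From mathcomp Require Import all_boot all_fingroup zmodp cyclic.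
Set Implicit Arguments. Unset Strict Implicit. Unset Printing Implicit Defensive.

(* Give every non-edge {u, v} of the graph, loops {v, v} included, its own
   prime, and label a vertex by the product of the primes of the non-edges at
   it. In a cyclic group <g> of order 2P, P the product of all these primes,
   send v to g ^+ label v. Adjacent vertices have coprime labels, and two
   powers of g with coprime exponents generate <g> by Bezout. Non-adjacent
   vertices share the prime q of their non-edge; q divides #[g], so both
   powers lie in the proper subgroup <g ^+ q>. The loop primes make the
   labels injective. *)

Definition iter_prime_above k := iter k.+1 (fun m => s2val (prime_above m)) 1.

Lemma prime_iter_prime_above k : prime (iter_prime_above k).
Proof. by rewrite /iter_prime_above iterS /=; case: prime_above. Qed.

Lemma iter_prime_above_inj : injective iter_prime_above.
Proof.
apply/incn_inj/leq_mono/(homo_ltn ltn_trans) => k.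
rewrite /iter_prime_above [in X in _ < X]iterS.
by case: (prime_above (iter k.+1 _ _)).
Qed.

Lemma coprime_prodl (I : finType) (P : pred I) (F : I -> nat) m :
  (forall i, P i -> coprime (F i) m) -> coprime (\prod_(i | P i) F i) m.
Proof.
move=> coprimeFm; elim/big_ind: _ => // [|a b]; first exact: coprime1n.
by rewrite coprimeMl => -> ->.
Qed.

Section PrimeLabelling.
Variables (V : finType) (e : rel V) (pr : V * V -> nat).
Hypotheses (e_sym : symmetric e) (e_irr : irreflexive e).
Hypotheses (pr_prime : forall i, prime (pr i)) (pr_inj : injective pr).

Definition incident_nonedge v (i : V * V) : bool :=
  ((i.1 == v) || (i.2 == v)) && ~~ e i.1 i.2.

Definition vertex_label v := \prod_(i | incident_nonedge v i) pr i.

Lemma dvd_vertex_label v i : (pr i %| vertex_label v) = incident_nonedge v i.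
Proof.
apply/idP/idP => [|vi]; last by rewrite /vertex_label (bigD1 i) //= dvdn_mulr.
apply: contraLR => not_vi; rewrite -prime_coprime // coprime_sym.
apply: coprime_prodl => j vj; rewrite prime_coprime // dvdn_prime2 //.
by apply: contraNneq not_vi => /pr_inj <-.
Qed.

Lemma vertex_label_dvd_prod v : vertex_label v %| \prod_(i : V * V) pr i.
Proof. by rewrite [X in _ %| X](bigID (incident_nonedge v)) dvdn_mulr. Qed.

Lemma incident_nonedge_diag v : incident_nonedge v (v, v).
Proof. by rewrite /incident_nonedge /= eqxx e_irr. Qed.

Lemma vertex_label_inj : injective vertex_label.
Proof.
move=> u v eq_uv; have := incident_nonedge_diag v.
rewrite -dvd_vertex_label -eq_uv dvd_vertex_label /incident_nonedge /=.
by rewrite orbb andbC e_irr => /eqP.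
Qed.

Lemma incident_nonedge_common u v i :
  incident_nonedge u i -> incident_nonedge v i -> ~~ e u v.
Proof.
rewrite /incident_nonedge; case: i => x y /=.
by case/andP=> /orP[]/eqP-> nexy /andP[/orP[]/eqP<- _]; rewrite ?e_irr // e_sym.
Qed.

Lemma coprime_vertex_label u v :
  e u v -> coprime (vertex_label u) (vertex_label v).
Proof.
move=> euv; apply: coprime_prodl => i ui; rewrite prime_coprime // dvd_vertex_label.
by apply: contraL euv => /(incident_nonedge_common ui).
Qed.

Lemma nonedge_dvd_vertex_label u v :
  ~~ e u v -> pr (u, v) %| gcdn (vertex_label u) (vertex_label v).
Proof.
by move=> neuv; rewrite dvdn_gcd !dvd_vertex_label /incident_nonedge /= !eqxx orbT neuv.
Qed.

End PrimeLabelling.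

Local Open Scope group_scope.

Section TwoGeneratedCyclic.
Variables (gT : finGroupType) (g : gT).

Lemma gen_expg2_coprime_cycle x y :
  coprime x y -> <<[set g ^+ x; g ^+ y]>> = <[g]>.
Proof.
move=> cxy; pose H := <<[set g ^+ x; g ^+ y]>>%G.
have xH : g ^+ x \in H by rewrite mem_gen // !inE eqxx.
have yH : g ^+ y \in H by rewrite mem_gen // !inE eqxx orbT.
have gH : g \in H.
  have [x0|x_gt0] := posnP x.
    by move: cxy yH; rewrite x0 /coprime gcd0n => /eqP->.
  case: (egcdnP y x_gt0) cxy => km kn def_km _ /eqP cxy.
  have -> : g = (g ^+ y) ^- kn * (g ^+ x) ^+ km.
    by rewrite -!expgM (mulnC x) def_km cxy expgD expg1 (mulnC y) mulKg.
  by rewrite groupMl ?groupV; apply: groupX.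
apply/eqP; rewrite eqEsubset cycle_subG gH andbT gen_subG.
by apply/subsetP => z; rewrite !inE => /orP[]/eqP->; rewrite mem_cycle.
Qed.

Lemma gen_expg2_dvd_neq_cycle q x y :
  1 < q -> q %| #[g] -> q %| x -> q %| y -> <<[set g ^+ x; g ^+ y]>> != <[g]>.
Proof.
move=> q_gt1 q_dvd_g q_dvd_x q_dvd_y.
have sub_gq : <<[set g ^+ x; g ^+ y]>> \subset <[g ^+ q]>.
  rewrite gen_subG; apply/subsetP => z; rewrite !inE => /orP[]/eqP->.
    by rewrite -(divnK q_dvd_x) mulnC expgM mem_cycle.
  by rewrite -(divnK q_dvd_y) mulnC expgM mem_cycle.
apply: contraTneq sub_gq => ->; apply/negP => /subset_leq_card.
by rewrite -!orderE orderXdiv // leqNgt ltn_Pdiv ?order_gt0.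
Qed.

End TwoGeneratedCyclic.

Section CyclicEmbedding.
Variables (V : finType) (e : rel V) (gT : finGroupType) (g : gT) (a : V -> nat).
Hypotheses (e_irr : irreflexive e) (a_inj : injective a).
Hypothesis a_lt_order : forall v, a v < #[g].
Hypothesis coprime_edge : forall u v, e u v -> coprime (a u) (a v).
Hypothesis common_factor_nonedge : forall u v, ~~ e u v ->
  exists q, [&& 1 < q, q %| #[g], q %| a u & q %| a v].

Lemma cycle_induced_embedding : induced_embedding e <[g]> (fun v => g ^+ a v).
Proof.
have f_inj : injective (fun v => g ^+ a v).
  by move=> u v /eqP; rewrite eq_expg_mod_order !modn_small // => /eqP/a_inj.
split=> //; split=> [v|u v]; first exact: mem_cycle.
rewrite /gen_adj !mem_cycle (inj_eq f_inj) /=.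
have [<-|_] := eqVneq u v; first by rewrite e_irr.
have [euv|neuv] := boolP (e u v).
  by rewrite gen_expg2_coprime_cycle ?eqxx ?coprime_edge.
have [q /and4P[q_gt1 q_dvd_g q_dvd_u q_dvd_v]] := common_factor_nonedge neuv.
by rewrite (negPf (gen_expg2_dvd_neq_cycle q_gt1 q_dvd_g q_dvd_u q_dvd_v)).
Qed.

End CyclicEmbedding.

Local Close Scope group_scope.

Theorem theorem5p2 (V : finType) (e : rel V) :
  simple_graph e ->
  exists (gT : finGroupType) (G : {group gT}) (f : V -> gT),
    induced_embedding e G f.
Proof.
case=> e_sym e_irr.
pose pr (i : V * V) := iter_prime_above (enum_rank i).
have pr_prime i : prime (pr i) by exact: prime_iter_prime_above.
have pr_inj : injective pr by move=> i j /iter_prime_above_inj/val_inj/enum_rank_inj.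
pose P := \prod_(i : V * V) pr i.
have P_gt0 : 0 < P by apply: prodn_gt0 => i; exact: prime_gt0.
(* Labels divide P, so they stay below the order 2P and distinct labels give
   distinct powers of the generator. *)
pose n := P.*2.-1.
have order_gen : #[Zp1 : 'I_n.+1]%g = P.*2 by rewrite order_Zp1 prednK ?double_gt0.
exists _, <[Zp1 : 'I_n.+1]>%G, (fun v => (Zp1 ^+ vertex_label e pr v)%g).
apply: cycle_induced_embedding => // [|v|u v|u v neuv].
- exact: vertex_label_inj.
- rewrite order_gen (leq_ltn_trans (dvdn_leq P_gt0 (vertex_label_dvd_prod _ _ _))) //.
  by rewrite -addnn -[X in X < _]addn0 ltn_add2l.
- exact: coprime_vertex_label.
- have := nonedge_dvd_vertex_label pr_prime pr_inj neuv.
  rewrite dvdn_gcd => /andP[dvd_u dvd_v].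
  exists (pr (u, v)); rewrite prime_gt1 // dvd_u dvd_v order_gen -muln2 dvdn_mulr //.
  exact: dvdn_trans dvd_u (vertex_label_dvd_prod _ _ _).
Qed.
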